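(* Let $\lambda=(\lambda_1\ge\cdots\ge\lambda_n)$ be a partition with positive parts, $m=\lambda_1$, and let $\mathbf T_\lambda=\{(i,j):1\le i\le n,\ 1\le j\le\lambda_i\}$. Let $I_2(\mathbf T_\lambda)\subset K[\mathbf T_\lambda]$ be the ideal generated by the 2-minors of $\mathbf T_\lambda$, and let $L\subset K[\mathbf T_\lambda]$ be the ideal generated by the diagonal sums $$\sum_{i\ge1,\ (i,k+i)\in\mathbf T_\lambda}T_{i,k+i}\ (k=0,\dots,m-1),\qquad\sum_{i\ge1,\ (k+i,i)\in\mathbf T_\lambda}T_{k+i,i}\ (k=1,\dots,n-1).$$ Let $\prec$ be the reverse-lexicographic term order induced by $T_{1,1}>T_{1,2}>\cdots>T_{1,\lambda_1}>T_{2,1}>\cdots>T_{2,\lambda_2}>\cdots>T_{n,\lambda_n}$. Then $T_{ij}^j\in\mathrm{in}_\prec(I_2(\mathbf T_\lambda)+L)$ for every $(i,j)\in\mathbf T_\lambda$.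
   Context: $K$ is a field; $K[\mathbf T_\lambda]$ is the polynomial ring over $K$ in variables $T_{ij}$, $(i,j)\in\mathbf T_\lambda$. A 2-minor of $\mathbf T_\lambda$ is $T_{ij}T_{kl}-T_{il}T_{kj}$ with $i<k$, $j<l$ and $(i,j),(i,l),(k,j),(k,l)\in\mathbf T_\lambda$. *)

From HB Require Import structures.
From mathcomp Require Import all_boot all_order all_algebra.
Set Implicit Arguments. Unset Strict Implicit. Unset Printing Implicit Defensive.
Import Order.TTheory GRing.Theory Num.Theory.
Local Open Scope ring_scope.

(* mpoly R n = R[X_0,...,X_{n-1}]; the last variable X_{n-1} is outermost. *)
Fixpoint mpoly (R : comNzRingType) (n : nat) : comNzRingType :=
  if n is n'.+1 then ({poly mpoly R n'} : comNzRingType) else R.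

(* the variable X_k of mpoly R n (k < n; junk value 0 if k >= n) *)
Fixpoint mvar (R : comNzRingType) (n : nat) (k : nat) : mpoly R n :=
  match n return mpoly R n with
  | 0 => 0
  | n'.+1 => if k == n' then ('X : {poly mpoly R n'}) else (mvar R n' k)%:P
  end.

Definition expo_ok (n : nat) (e : nat -> nat) : Prop := forall k, (n <= k)%N -> e k = 0%N.

Definition mmono (R : comNzRingType) (n : nat) (e : nat -> nat) : mpoly R n :=
  \prod_(k < n) mvar R n k ^+ e k.

Fixpoint mcoef (R : comNzRingType) (n : nat) : mpoly R n -> (nat -> nat) -> R :=
  match n return mpoly R n -> (nat -> nat) -> R with
  | 0 => fun p _ => p
  | n'.+1 => fun p e => mcoef (n := n') ((p : {poly mpoly R n'})`_(e n')) e
  end.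

Definition mdeg (n : nat) (e : nat -> nat) : nat := (\sum_(k < n) e k)%N.

(* degree reverse-lexicographic order with X_0 > X_1 > ... > X_{n-1}:
   e1 < e2 iff deg e1 < deg e2, or the degrees agree and the last
   nonzero entry of e2 - e1 is negative. *)
Definition revlex_lt (n : nat) (e1 e2 : nat -> nat) : Prop :=
  (mdeg n e1 < mdeg n e2)%N \/
  (mdeg n e1 = mdeg n e2 /\
   exists k, [/\ (k < n)%N, (e2 k < e1 k)%N &
                 forall l, (k < l)%N -> (l < n)%N -> e1 l = e2 l]).

Definition is_initial_mono (R : comNzRingType) (n : nat) (f u : mpoly R n) : Prop :=
  exists e, [/\ expo_ok n e, mcoef f e != 0, u = mmono R n e &
    forall e', expo_ok n e' -> mcoef f e' != 0 ->
      (exists2 k, (k < n)%N & e' k <> e k) -> revlex_lt n e' e].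

Definition ideal_gen (R : comNzRingType) (S : R -> Prop) (f : R) : Prop :=
  exists s : seq (R * R), (forall p, p \in s -> S p.2) /\
    f = \sum_(p <- s) p.1 * p.2.

Definition initial_ideal (R : comNzRingType) (n : nat) (I : mpoly R n -> Prop)
  : mpoly R n -> Prop :=
  ideal_gen (fun u => exists2 f, I f & is_initial_mono f u).

Definition is_partition (lam : seq nat) : bool :=
  sorted (fun a b => b <= a)%N lam && all (fun a => 0 < a)%N lam.

Definition cell (lam : seq nat) (i j : nat) : bool :=
  [&& (1 <= i)%N, (i <= size lam)%N, (1 <= j)%N & (j <= nth 0 lam i.-1)%N].

Definition ncells (lam : seq nat) : nat := sumn lam.

(* position of cell (i,j) in the order T_{1,1}, T_{1,2}, ..., T_{n,lambda_n} *)
Definition cidx (lam : seq nat) (i j : nat) : nat := (sumn (take i.-1 lam) + j.-1)%N.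

Definition Tv (K : fieldType) (lam : seq nat) (i j : nat) : mpoly K (ncells lam) :=
  mvar K (ncells lam) (cidx lam i j).

Definition two_minor (K : fieldType) (lam : seq nat) (f : mpoly K (ncells lam)) : Prop :=
  exists i j k l, [/\ (i < k)%N, (j < l)%N,
    [&& cell lam i j, cell lam i l, cell lam k j & cell lam k l] &
    f = Tv K lam i j * Tv K lam k l - Tv K lam i l * Tv K lam k j].

Definition diag_sum (K : fieldType) (lam : seq nat) (f : mpoly K (ncells lam)) : Prop :=
  (exists2 k, (k < head 0%N lam)%N &
     f = \sum_(1 <= i < (size lam).+1 | cell lam i (k + i)) Tv K lam i (k + i)) \/
  (exists2 k, (1 <= k < size lam)%N &
     f = \sum_(1 <= i < (size lam).+1 | cell lam (k + i) i) Tv K lam (k + i) i).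

Definition I2L (K : fieldType) (lam : seq nat) : mpoly K (ncells lam) -> Prop :=
  ideal_gen (fun f => two_minor f \/ diag_sum f).
Arguments two_minor K lam f : clear implicits.
Arguments diag_sum K lam f : clear implicits.
Arguments I2L K lam f : clear implicits.

(* Fix a cell (i,j). The diagonal sum through a cell (i,b) of the same row shows
   that T_{i,b} is congruent modulo L to minus the other cells of its diagonal.
   Those below row i involve variables smaller than T_{i,j}; each cell (a,x) above
   has a < i and x < b, and the 2-minor on rows a, i trades T_{a,x} T_{i,y} for
   T_{a,y} T_{i,x}, lowering the column of the row-i factor. By induction on k, a
   product T_{i,b} T_{i,y_1} ... T_{i,y_k} with b <= k+1 is therefore congruent
   modulo I_2 + L to a form of degree k+1 each of whose monomials contains a
   variable smaller than T_{i,j}. For b = y_1 = ... = y_{j-1} = j this exhibits an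
   element T_{i,j}^j - (such a form) of the ideal, and in the degree reverse
   lexicographic order T_{i,j}^j beats every monomial of the same degree that
   contains a smaller variable. *)

From mathcomp Require Import all_boot all_order all_algebra zify ring.
Set Implicit Arguments. Unset Strict Implicit. Unset Printing Implicit Defensive.
Import GRing.Theory.
Local Open Scope ring_scope.

Fixpoint expo_eq (n : nat) (e e' : nat -> nat) : bool :=
  if n is n'.+1 then (e n' == e' n') && expo_eq n' e e' else true.

Lemma expo_eqP n e e' : reflect (forall l, (l < n)%N -> e l = e' l) (expo_eq n e e').
Proof.
elim: n => [|n IH] /=; first by constructor.
apply: (iffP andP) => [[/eqP en /IH e_n] l|e_n].
  by rewrite ltnS leq_eqVlt => /predU1P[->|/e_n].
by split; [apply/eqP/e_n | apply/IH => l /ltnW/e_n].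
Qed.
Arguments expo_eqP {n e e'}.

Definition expo_var (c j : nat) : nat -> nat := fun l => if l == c then j else 0%N.

Lemma mdeg_ext n e e' : (forall l, (l < n)%N -> e l = e' l) -> mdeg n e = mdeg n e'.
Proof. by move=> ee'; apply: eq_bigr => l _; apply: ee'. Qed.

Lemma mdeg_expo_var n c j : (c < n)%N -> mdeg n (expo_var c j) = j.
Proof.
move=> cn; rewrite /mdeg (bigD1 (Ordinal cn)) //= /expo_var eqxx big1 ?addn0 //.
by move=> k kc; rewrite /expo_var ifN //; apply: contraNneq kc => kc; apply/eqP/val_inj.
Qed.

Definition expo_add n (P Q : (nat -> nat) -> Prop) (e : nat -> nat) :=
  exists e1 e2, [/\ P e1, Q e2 & forall l, (l < n)%N -> e l = (e1 l + e2 l)%N].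

Lemma mdeg_add n e e1 e2 : (forall l, (l < n)%N -> e l = (e1 l + e2 l)%N) ->
  mdeg n e = (mdeg n e1 + mdeg n e2)%N.
Proof. by move=> eE; rewrite /mdeg -big_split; apply: eq_bigr => l _; apply: eE. Qed.

Definition homog n d (e : nat -> nat) := mdeg n e = d.

Definition beyond n c (e : nat -> nat) := exists l, [/\ (c < l)%N, (l < n)%N & (0 < e l)%N].

Definition homog_beyond n c d e := homog n d e /\ beyond n c e.

Lemma expo_add_homog n a b e : expo_add n (homog n a) (homog n b) e -> homog n (a + b) e.
Proof. by case=> e1 [e2 [e1a e2b /mdeg_add]]; rewrite /homog e1a e2b. Qed.

Lemma expo_add_homog_beyond n c a b e :
  expo_add n (homog n a) (homog_beyond n c b) e -> homog_beyond n c (a + b) e.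
Proof.
case=> e1 [e2 [e1a [e2b [l [cl ln e2l]]] eE]].
split; first by rewrite /homog (mdeg_add eE) e1a e2b.
by exists l; rewrite eE // ltn_addl.
Qed.

Section Ideals.
Variable S : comNzRingType.
Implicit Type G : S -> Prop.

Lemma ideal_gen0 G : ideal_gen G 0.
Proof. by exists [::]; rewrite big_nil. Qed.

Lemma ideal_gen_mem G g : G g -> ideal_gen G g.
Proof.
exists [:: (1, g)]; split; first by move=> p; rewrite inE => /eqP->.
by rewrite big_seq1 mul1r.
Qed.

Lemma ideal_genD G f g : ideal_gen G f -> ideal_gen G g -> ideal_gen G (f + g).
Proof.
move=> [s1 [s1G ->]] [s2 [s2G ->]]; exists (s1 ++ s2); split; last by rewrite big_cat.
by move=> p; rewrite mem_cat => /orP[/s1G|/s2G].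
Qed.

Lemma ideal_genMl G q f : ideal_gen G f -> ideal_gen G (q * f).
Proof.
move=> [s [sG ->]]; exists [seq (q * p.1, p.2) | p <- s]; split.
  by move=> p /mapP[x /sG xG ->].
by rewrite big_map mulr_sumr; apply: eq_bigr => p _; rewrite mulrA.
Qed.

Lemma ideal_genN G f : ideal_gen G f -> ideal_gen G (- f).
Proof. by rewrite -mulN1r; apply: ideal_genMl. Qed.

End Ideals.

Section Coefficients.
Variable R : comNzRingType.

Lemma mcoef_ext n (p : mpoly R n) e e' :
  (forall l, (l < n)%N -> e l = e' l) -> mcoef p e = mcoef p e'.
Proof.
elim: n p => [|n IH] p ee' //=.
by rewrite ee' // (IH _) // => l /ltnW; apply: ee'.
Qed.

Lemma mcoef0 n e : mcoef (0 : mpoly R n) e = 0.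
Proof. by elim: n => [|n IH] //=; rewrite coef0 IH. Qed.

Lemma mcoefD n (p q : mpoly R n) e : mcoef (p + q) e = mcoef p e + mcoef q e.
Proof. by elim: n p q => [|n IH] p q //=; rewrite coefD IH. Qed.

Lemma mcoefN n (p : mpoly R n) e : mcoef (- p) e = - mcoef p e.
Proof. by elim: n p => [|n IH] p //=; rewrite coefN IH. Qed.

Lemma mcoefB n (p q : mpoly R n) e : mcoef (p - q) e = mcoef p e - mcoef q e.
Proof. by rewrite mcoefD mcoefN. Qed.

Lemma mcoef1 n e : mcoef (1 : mpoly R n) e = (expo_eq n e (fun=> 0%N))%:R.
Proof.
elim: n => [|n IH] //=; rewrite coef1.
by case: eqP => _ /=; rewrite ?IH ?mcoef0.
Qed.

Lemma mcoef_mvarX n c j e : (c < n)%N ->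
  mcoef (mvar R n c ^+ j) e = (expo_eq n e (expo_var c j))%:R.
Proof.
elim: n => [|n IH] //= cn; case: eqP => [->|/eqP cNn].
  rewrite coefXn /expo_var eqxx.
  have -> : expo_eq n e (fun l => if l == n then j else 0%N) = expo_eq n e (fun=> 0%N).
    by apply/expo_eqP/expo_eqP => ee' l ln; rewrite ee' // ltn_eqF.
  by case: eqP => _ /=; rewrite ?mcoef1 ?mcoef0.
have {}cn : (c < n)%N by rewrite ltn_neqAle -ltnS cn andbT.
rewrite -rmorphXn coefC /expo_var (gtn_eqF cn).
by case: eqP => _ /=; rewrite ?IH ?mcoef0.
Qed.

Definition supp_in n (p : mpoly R n) (P : (nat -> nat) -> Prop) :=
  forall e, mcoef p e != 0 -> P e.

Lemma supp_in0 n P : supp_in (0 : mpoly R n) P.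
Proof. by move=> e; rewrite mcoef0 eqxx. Qed.

Lemma supp_inW n (p : mpoly R n) (P Q : (nat -> nat) -> Prop) :
  (forall e, P e -> Q e) -> supp_in p P -> supp_in p Q.
Proof. by move=> PQ pP e /pP /PQ. Qed.

Lemma supp_inD n (p q : mpoly R n) P : supp_in p P -> supp_in q P -> supp_in (p + q) P.
Proof.
move=> pP qP e; rewrite mcoefD.
by have [/eqP->|/pP//] := boolP (mcoef p e == 0); rewrite add0r; apply: qP.
Qed.

Lemma supp_inN n (p : mpoly R n) P : supp_in p P -> supp_in (- p) P.
Proof. by move=> pP e; rewrite mcoefN oppr_eq0; apply: pP. Qed.

Lemma supp_in_sum n I (r : seq I) (Pr : pred I) (F : I -> mpoly R n) P :
  (forall x, Pr x -> supp_in (F x) P) -> supp_in (\sum_(x <- r | Pr x) F x) P.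
Proof.
move=> FP; apply: (big_ind (fun p : mpoly R n => supp_in p P)) => //.
  exact: supp_in0.
by move=> p q; apply: supp_inD.
Qed.

Lemma supp_inM n (p q : mpoly R n) P Q :
  supp_in p P -> supp_in q Q -> supp_in (p * q) (expo_add n P Q).
Proof.
elim: n p q P Q => [|n IH] p q P Q pP qQ e /=.
  move=> pq_neq0; exists e, e; split=> //; [apply: pP | apply: qQ].
    by apply: contraNneq pq_neq0 => /= ->; rewrite mul0r.
  by apply: contraNneq pq_neq0 => /= ->; rewrite mulr0.
(* The outer coefficient of [p * q] is a convolution; [upd e' a] sets the outer
   exponent of [e'] to [a]. *)
pose upd (e' : nat -> nat) a l := if l == n then a else e' l.
have updE e' a : forall l, (l < n)%N -> upd e' a l = e' l by move=> l /ltn_eqF; rewrite /upd => ->.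
rewrite coefM => nz_e.
have : supp_in (\sum_(a < (e n).+1) p`_a * q`_(e n - a))
               (fun e' => expo_add n.+1 P Q (upd e' (e n))).
  apply: supp_in_sum => a _.
  apply: supp_inW (IH _ _ (fun e1 => P (upd e1 a)) (fun e2 => Q (upd e2 (e n - a)%N)) _ _).
  + move=> e' [e1 [e2 [Pe1 Qe2 e'E]]]; exists (upd e1 a), (upd e2 (e n - a)%N); split=> // l.
    rewrite ltnS leq_eqVlt => /predU1P[->|ln]; first by rewrite /upd !eqxx subnKC // -ltnS.
    by rewrite !updE // e'E.
  + by move=> e1 nz; apply: pP; rewrite /= (mcoef_ext _ (updE e1 a)) /upd eqxx.
  + by move=> e2 nz; apply: qQ; rewrite /= (mcoef_ext _ (updE e2 _)) /upd eqxx.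
move=> /(_ e nz_e) [e1 [e2 [Pe1 Qe2 eE]]]; exists e1, e2; split=> // l ln.
by rewrite -eE // /upd; case: eqP => // ->.
Qed.

Lemma supp_in_mvar n c : (c < n)%N ->
  supp_in (mvar R n c) (fun e => forall l, (l < n)%N -> e l = expo_var c 1 l).
Proof.
by move=> cn e; rewrite -[mvar R n c]expr1 mcoef_mvarX //; case: expo_eqP; rewrite ?eqxx.
Qed.

Lemma supp_in_mvar_homog n c : (c < n)%N -> supp_in (mvar R n c) (homog n 1).
Proof.
move=> cn; apply: supp_inW (supp_in_mvar cn) => e eE.
by rewrite /homog (mdeg_ext eE) mdeg_expo_var.
Qed.

Lemma supp_in_mvar_beyond n c c' : (c < c')%N -> (c' < n)%N ->
  supp_in (mvar R n c') (homog_beyond n c 1).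
Proof.
move=> cc' c'n e nz; split; first exact: supp_in_mvar_homog c'n e nz.
by exists c'; rewrite (supp_in_mvar c'n nz) // /expo_var eqxx.
Qed.

Lemma supp_in_prod_mvar n I (r : seq I) (F : I -> nat) : all (fun x => F x < n)%N r ->
  supp_in (\prod_(x <- r) mvar R n (F x)) (homog n (size r)).
Proof.
elim: r => [_|x r IH /andP[xn rn]]; rewrite ?big_nil ?big_cons.
  move=> e; rewrite mcoef1; case: expo_eqP => [e0 _|]; last by rewrite eqxx.
  by rewrite /homog (mdeg_ext e0) /mdeg big1.
apply: supp_inW (supp_inM (supp_in_mvar_homog xn) (IH rn)) => e.
by move/expo_add_homog; rewrite add1n.
Qed.

Section ModSupp.
Variables (n : nat) (G : mpoly R n -> Prop).

Definition mod_supp (p : mpoly R n) P := exists2 f, ideal_gen G f & supp_in (p - f) P.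

Lemma mod_supp_ideal p P : ideal_gen G p -> mod_supp p P.
Proof. by move=> pG; exists p; rewrite // subrr; apply: supp_in0. Qed.

Lemma mod_supp_supp p P : supp_in p P -> mod_supp p P.
Proof. by exists 0; rewrite ?subr0 //; apply: ideal_gen0. Qed.

Lemma mod_suppW p (P Q : (nat -> nat) -> Prop) :
  (forall e, P e -> Q e) -> mod_supp p P -> mod_supp p Q.
Proof. by move=> PQ [f fG pfP]; exists f => //; apply: supp_inW pfP. Qed.

Lemma mod_suppD p q P : mod_supp p P -> mod_supp q P -> mod_supp (p + q) P.
Proof.
move=> [f fG pfP] [g gG qgP]; exists (f + g); first exact: ideal_genD.
by rewrite opprD addrACA; apply: supp_inD.
Qed.

Lemma mod_suppN p P : mod_supp p P -> mod_supp (- p) P.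
Proof.
move=> [f fG pfP]; exists (- f); first exact: ideal_genN.
by rewrite -opprD; apply: supp_inN.
Qed.

Lemma mod_suppMl q p Q P :
  supp_in q Q -> mod_supp p P -> mod_supp (q * p) (expo_add n Q P).
Proof.
move=> qQ [f fG pfP]; exists (q * f); first exact: ideal_genMl.
by rewrite -mulrBr; apply: supp_inM.
Qed.

Lemma mod_supp_sum I (r : seq I) (Pr : pred I) (F : I -> mpoly R n) P :
  (forall x, Pr x -> mod_supp (F x) P) -> mod_supp (\sum_(x <- r | Pr x) F x) P.
Proof.
move=> FP; apply: (big_ind (mod_supp^~ P)) => //.
  exact/mod_supp_ideal/ideal_gen0.
by move=> p q; apply: mod_suppD.
Qed.

End ModSupp.

Lemma is_initial_mvarX n (f : mpoly R n) c j : (c < n)%N ->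
  supp_in (mvar R n c ^+ j - f) (homog_beyond n c j) ->
  is_initial_mono f (mvar R n c ^+ j).
Proof.
move=> cn Xf.
have mcoef_f e : mcoef f e = (expo_eq n e (expo_var c j))%:R - mcoef (mvar R n c ^+ j - f) e.
  by rewrite mcoefB mcoef_mvarX // subKr.
have var0 l : (c < l)%N -> expo_var c j l = 0%N by move=> cl; rewrite /expo_var gtn_eqF.
exists (expo_var c j); split.
- by move=> l nl; apply/var0/(leq_trans cn nl).
- rewrite mcoef_f; case: expo_eqP => // _.
  have [/eqP->|/Xf[_ [l [cl _]]]] := boolP (mcoef (mvar R n c ^+ j - f) (expo_var c j) == 0).
    by rewrite subr0 oner_neq0.
  by rewrite var0.
- rewrite /mmono (bigD1 (Ordinal cn)) //= /expo_var eqxx big1 ?mulr1 // => k kc.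
  by rewrite ifN ?expr0 //; apply: contraNneq kc => kc; apply/eqP/val_inj.
move=> e _; rewrite mcoef_f; case: expo_eqP => [e_eq _ [k kn []]|_]; first exact: e_eq.
rewrite sub0r oppr_eq0 => /Xf[deg_e [l [cl ln el]]] _.
right; split; first by rewrite deg_e mdeg_expo_var.
have exP : exists m, ((m < n) && (0 < e m))%N by exists l; rewrite ln el.
have ubP m : ((m < n) && (0 < e m))%N -> (m <= n)%N by case/andP=> /ltnW.
(* the last variable occurring in [e] is beyond [c], where [X_c^j] has exponent 0 *)
case: (ex_maxnP exP ubP) => m /andP[mn em] m_max.
have cm : (c < m)%N by apply: leq_trans cl (m_max l _); rewrite ln el.
exists m; split; rewrite ?var0 //.
move=> l' ml' l'n; rewrite var0 ?(ltn_trans cm ml') //; apply/eqP; rewrite -leqn0 leqNgt.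
by apply: contraL ml' => el'; rewrite -leqNgt m_max // l'n.
Qed.

End Coefficients.

Lemma cell_up lam r a y : is_partition lam -> cell lam r y -> (0 < a <= r)%N ->
  cell lam a y.
Proof.
move=> /andP[sorted_lam _] /and4P[r1 rsz y1 yr] /andP[a1 ar].
apply/and4P; split=> //; first exact: leq_trans rsz. apply: leq_trans yr _.
apply: (sorted_leq_nth (rev_trans leq_trans)) => //; rewrite ?inE ?prednK ?(leq_trans ar) //.
by rewrite -!subn1 leq_sub2r.
Qed.

Lemma cell_left lam r y y' : cell lam r y -> (0 < y' <= y)%N -> cell lam r y'.
Proof. by case/and4P=> r1 rsz _ yr /andP[y1 y'y]; rewrite /cell r1 rsz y1 (leq_trans y'y). Qed.

Lemma sumn_take_leq m m' (s : seq nat) : (m <= m')%N ->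
  (sumn (take m s) <= sumn (take m' s))%N.
Proof.
by move=> mm'; rewrite -(take_takel s mm') -{2}(cat_take_drop m (take m' s)) sumn_cat leq_addr.
Qed.

Lemma cidx_lt_sumn_take lam a x : cell lam a x -> (cidx lam a x < sumn (take a lam))%N.
Proof.
case/and4P=> a1 asz x1 xa; rewrite /cidx -{2}(prednK a1) (take_nth 0) ?prednK //.
by rewrite sumn_rcons ltn_add2l prednK.
Qed.

Lemma cidx_lt_ncells lam a x : cell lam a x -> (cidx lam a x < ncells lam)%N.
Proof.
move=> ax; apply: leq_trans (cidx_lt_sumn_take ax) _.
by rewrite /ncells -{2}(take_size lam) sumn_take_leq //; case/and4P: ax.
Qed.

Lemma cidx_lt_row lam a x r y : cell lam a x -> (a < r)%N ->
  (cidx lam a x < cidx lam r y)%N.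
Proof.
move=> ax ar; apply: leq_trans (cidx_lt_sumn_take ax) (leq_trans _ (leq_addr _ _)).
by apply: sumn_take_leq; rewrite -ltnS prednK // (leq_ltn_trans _ ar).
Qed.

Section Diagonals.
Variables (K : fieldType) (lam : seq nat) (hlam : is_partition lam).
Variables (i j : nat) (hij : cell lam i j).

Local Notation n := (ncells lam).
Local Notation c := (cidx lam i j).
Local Notation T := (Tv K lam).
Local Notation gens := (fun f => two_minor K lam f \/ diag_sum K lam f).

Lemma Tv_homog r y : cell lam r y -> supp_in (T r y) (homog n 1).
Proof. by move/cidx_lt_ncells; apply: supp_in_mvar_homog. Qed.

Lemma Tv_beyond r y : cell lam r y -> (i < r)%N -> supp_in (T r y) (homog_beyond n c 1).
Proof.
by move=> ry ir; apply: supp_in_mvar_beyond (cidx_lt_ncells ry); exact: cidx_lt_row hij ir.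
Qed.

Lemma diag_split (d : nat -> nat * nat) m N b : (0 < m <= N)%N -> d m = (i, b) ->
  cell lam i b -> (forall r, (r < m)%N -> (d r).1 < i /\ (d r).2 < b)%N ->
  (forall r, (m < r)%N -> (i < (d r).1)%N) ->
  exists2 As : seq (nat * nat),
    (forall p, p \in As -> [/\ (p.1 < i)%N, (p.2 < b)%N & cell lam p.1 p.2]) &
    supp_in (\sum_(1 <= r < N.+1 | cell lam (d r).1 (d r).2) T (d r).1 (d r).2
             - T i b - \sum_(p <- As) T p.1 p.2) (homog_beyond n c 1).
Proof.
move=> /andP[m0 mN] dm ib above below.
exists [seq d r | r <- index_iota 1 m & cell lam (d r).1 (d r).2].
  move=> p /mapP[r]; rewrite mem_filter mem_index_iota => /andP[rc /andP[_ rm]] ->.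
  by have [] := above r rm.
rewrite big_map big_filter (@big_cat_nat _ _ _ m 1 N.+1 _ _ m0 (leqW mN)).
rewrite (@big_ltn_cond _ _ _ m N.+1) ?ltnS // dm ib /=.
set A := \sum_(1 <= r < m | _) _; set B := \sum_(m.+1 <= r < N.+1 | _) _.
have -> : A + (T i b + B) - T i b - A = B by ring.
rewrite /B big_nat_cond; apply: supp_in_sum => r /andP[/andP[mr _] rc].
exact: Tv_beyond rc (below r mr).
Qed.

Lemma diag_sum_through b : cell lam i b ->
  exists2 S, gens S & exists2 As : seq (nat * nat),
    (forall p, p \in As -> [/\ (p.1 < i)%N, (p.2 < b)%N & cell lam p.1 p.2]) &
    supp_in (S - T i b - \sum_(p <- As) T p.1 p.2) (homog_beyond n c 1).
Proof.
move=> ib; have /and4P[i1 isz b1 bi] := ib.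
have [ileb|blti] := leqP i b.
- exists (\sum_(1 <= r < (size lam).+1 | cell lam r (b - i + r)) T r (b - i + r)).
    right; left; exists (b - i)%N => //.
    have /and4P[_ _ _] := cell_up hlam ib (i1 : (0 < 1 <= i)%N).
    by rewrite -nth0; apply: leq_trans; rewrite ltn_subrL i1 b1.
  apply: (@diag_split (fun r => (r, b - i + r)%N) i (size lam) b); rewrite /= ?subnK ?i1 //.
  by move=> r ri; split; lia.
- exists (\sum_(1 <= r < (size lam).+1 | cell lam (i - b + r) r) T (i - b + r) r).
    by right; right; exists (i - b)%N => //; apply/andP; split; lia.
  apply: (@diag_split (fun r => (i - b + r, r)%N) b (size lam) b) => //=.
  - by rewrite b1 (leq_trans (ltnW blti) isz).
  - by rewrite subnK // ltnW.
  - by move=> r rb; split; lia.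
  - by move=> r br; lia.
Qed.

Lemma diag_reduce b k (P : mpoly K n) : cell lam i b -> supp_in P (homog n k) ->
  (forall a x, (a < i)%N -> (x < b)%N -> cell lam a x ->
     mod_supp gens (T a x * P) (homog_beyond n c k.+1)) ->
  mod_supp gens (T i b * P) (homog_beyond n c k.+1).
Proof.
move=> ib Pk above; have [S gS [As AsP S_ib]] := diag_sum_through ib.
set A := \sum_(p <- As) T p.1 p.2.
have -> : T i b * P = P * S - A * P - P * (S - T i b - A) by ring.
apply: mod_suppD; first apply: mod_suppD.
- exact/mod_supp_ideal/ideal_genMl/ideal_gen_mem.
- apply: mod_suppN; rewrite /A big_distrl big_seq /=.
  by apply: mod_supp_sum => -[a x] /AsP[]; apply: above.
- apply/mod_suppN/mod_supp_supp; apply: supp_inW (supp_inM Pk S_ib) => e.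
  by move/expo_add_homog_beyond; rewrite addn1.
Qed.

Lemma two_minor_swap a r x y : (a < r)%N ->
  cell lam a x -> cell lam a y -> cell lam r x -> cell lam r y ->
  ideal_gen gens (T a x * T r y - T a y * T r x).
Proof.
move=> ar ax ay rx ry; have [xy|yx|->] := ltngtP x y; last by rewrite subrr; apply: ideal_gen0.
  by apply/ideal_gen_mem; left; exists a, x, r, y; rewrite ax ay rx ry.
rewrite -opprB; apply/ideal_genN/ideal_gen_mem; left.
by exists a, y, r, x; rewrite ax ay rx ry.
Qed.

Lemma row_monomial_beyond k b bs : size bs = k -> cell lam i b -> (b <= k.+1)%N ->
  all (cell lam i) bs ->
  mod_supp gens (T i b * \prod_(y <- bs) T i y) (homog_beyond n c k.+1).
Proof.
elim: k b bs => [|k IH] b [|y bs] //= size_bs ib bk.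
  move=> _; apply: (diag_reduce ib) => [|a x _ xb /and4P[_ _ x1 _]]; last by lia.
  exact: (supp_in_prod_mvar (r := [::])).
move=> /andP[iy ibs]; apply: (diag_reduce ib).
  rewrite -size_bs; apply: supp_in_prod_mvar.
  by rewrite /= (cidx_lt_ncells iy); apply/allP => z /(allP ibs)/cidx_lt_ncells.
have {}size_bs : size bs = k by case: size_bs.
move=> a x ai xb ax; rewrite big_cons.
have a0 : (0 < a)%N by case/and4P: ax.
have ix : cell lam i x by apply: cell_left ib _; case/and4P: ax => _ _ -> _; rewrite ltnW.
have ay : cell lam a y by apply: (cell_up hlam iy); rewrite a0 ltnW.
set Q := \prod_(z <- bs) T i z.
have -> : T a x * (T i y * Q) = T a y * (T i x * Q) + (T a x * T i y - T a y * T i x) * Q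
  by ring.
apply: mod_suppD.
  apply: mod_suppW (mod_suppMl (Tv_homog ay) (IH x bs size_bs ix _ ibs)); last by lia.
  by move=> e /expo_add_homog_beyond; rewrite add1n.
by apply/mod_supp_ideal; rewrite mulrC; apply/ideal_genMl/two_minor_swap.
Qed.

End Diagonals.

Unset Implicit Arguments.
Theorem lemma5p3 (K : fieldType) (lam : seq nat) (hlam : is_partition lam)
  (i j : nat) (hij : cell lam i j) :
  initial_ideal (I2L K lam) (Tv K lam i j ^+ j).
Proof.
have j0 : (0 < j)%N by case/and4P: hij.
have all_j : all (cell lam i) (nseq j.-1 j) by rewrite all_nseq hij orbT.
have := row_monomial_beyond K hlam hij (size_nseq j.-1 j) hij _ all_j.
rewrite prednK // big_nseq iter_mulr_1 -exprS prednK // => /(_ (leqnn j))[f If Xf].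
apply: ideal_gen_mem; exists f => //.
exact: is_initial_mvarX (cidx_lt_ncells hij) Xf.
Qed.
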